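(* Let $n\ge 2$, let $\Psi:Y_n^>\to W^{(n)}$ be the $\mathbb{C}$-algebra isomorphism with $\Psi(e_{i,r})=x_{i,1}^r$ (see context), let $\mathbf{Y}_n^>$ be the $\mathbb{Z}[\frac12]$-subalgebra of $Y_n^>$ generated by $e_{i,r}^t/t!$ ($i\in I$, $r,t\in\mathbb{N}$), and let $\mathbf{W}^{(n)}\subset W^{(n)}$ be the integral form described in the context. Then $\Psi(\mathbf{Y}_n^>)\subset\mathbf{W}^{(n)}$.
   Context: $\mathbb{N}=\{0,1,\dots\}$, $I=\{1,\dots,n-1\}$, $(c_{ij})$ the Cartan matrix of $\mathfrak{sl}_n$. $Y_n^>$: the $\mathbb{C}$-algebra generated by $e_{i,r}$ ($i\in I,r\in\mathbb{N}$) with relations $[e_{i,r+1},e_{j,s}]-[e_{i,r},e_{j,s+1}]=\frac{c_{ij}}{2}(e_{i,r}e_{j,s}+e_{j,s}e_{i,r})$; $[e_{i,r},e_{j,s}]=0$ if $c_{ij}=0$; $[e_{i,r_1},[e_{i,r_2},e_{j,s}]]+[e_{i,r_2},[e_{i,r_1},e_{j,s}]]=0$ if $c_{ij}=-1$. Shuffle algebra: for $\underline{k}=(k_1,\dots,k_{n-1})\in\mathbb{N}^I$, $W^{(n)}_{\underline k}$ is the space of rational functions $F$ in variables $\{x_{i,r}\}_{i\in I,1\le r\le k_i}$, symmetric under $\Sigma_{k_1}\times\cdots\times\Sigma_{k_{n-1}}$ (each $\Sigma_{k_i}$ permuting $x_{i,1},\dots,x_{i,k_i}$), such that (pole condition)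 $F=f/\prod_{i=1}^{n-2}\prod_{r\le k_i,\,r'\le k_{i+1}}(x_{i,r}-x_{i+1,r'})$ with $f$ a $\Sigma_{\underline k}$-symmetric polynomial, and (wheel condition) $F=0$ whenever $x_{i,r_1}=x_{i+\epsilon,s}+\frac12=x_{i,r_2}+1$ for some $\epsilon\in\{\pm1\}$, $i$, $r_1\ne r_2$, $s$. $W^{(n)}=\bigoplus_{\underline k}W^{(n)}_{\underline k}$ with product: for $F\in W^{(n)}_{\underline k}$, $G\in W^{(n)}_{\underline\ell}$, $F\star G=\sum_{\sigma}\sigma\big(F(\{x_{i,r}\}_{r\le k_i})G(\{x_{i',r'}\}_{k_{i'}<r'\le k_{i'}+\ell_{i'}})\prod_{i,i'\in I}\prod_{r\le k_i<r'}\zeta_{i,i'}(x_{i,r}-x_{i',r'})\big)$, where $\zeta_{i,j}(z)=1+\frac{c_{ij}}{2z}$ and $\sigma=(\sigma_i)_{i\in I}$ runs over $(\underline k,\underline\ell)$-shuffles, i.e. $\sigma_i\in\Sigma_{k_i+\ell_i}$ with $\sigma_i(1)<\dots<\sigma_i(k_i)$ and $\sigma_i(k_i+1)<\dots<\sigma_i(k_i+\ell_i)$, acting by $x_{i,r}\mapsto x_{i,\sigma_i(r)}$. It is known (Tsymbaliuk) that $e_{i,r}\mapsto x_{i,1}^r\in W^{(n)}_{\mathbf 1_i}$ extends to a $\mathbb{C}$-algebra isomorphism $\Psi:Y_n^>\to W^{(n)}$. $\mathbf{W}^{(n)}_{\underline k}$ is the set of $F\in W^{(n)}_{\underline k}$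 whose numerator $f$ (in the pole condition) has coefficients in $\mathbb{Z}[\frac12]$; $\mathbf{W}^{(n)}=\bigoplus_{\underline k}\mathbf{W}^{(n)}_{\underline k}$. *)

From HB Require Import structures.
From mathcomp Require Import all_boot all_order all_algebra all_fingroup.
From mathcomp Require Import reals complex mpoly.
Set Implicit Arguments. Unset Strict Implicit. Unset Printing Implicit Defensive.
Import Order.TTheory GRing.Theory Num.Theory.
Local Open Scope ring_scope.

(* Conventions: I = {1,...,n-1} is represented by 'I_N with N = n-1 (shift by one).
   Variables x_{i,r} (r = 1..k_i) are represented by x i r with r = 0..k_i-1.
   A point (assignment of all variables) is a function 'I_N -> nat -> C.
   An element of W^(n) = (+)_k W_k is represented by its family of homogeneous
   components X k : (point -> C), read as rational functions: two elements are
   identified (eqW) when every component agrees at all points whose relevant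
   coordinates (x_{i,r}, r < k_i) are pairwise distinct ("generic points"),
   a Zariski-dense set on which all rational functions involved are defined. *)

Definition grading (N : nat) := {ffun 'I_N -> nat}.
Definition pt (C : Type) (N : nat) := 'I_N -> nat -> C.
Definition elt (C : Type) (N : nat) := grading N -> pt C N -> C.

Section Defs.
Variables (C : fieldType) (N : nat).

Definition cartan (i j : 'I_N) : int :=
  if i == j then (2 : int)
  else if ((i.+1 == j :> nat) || (j.+1 == i :> nat)) then (-1 : int) else (0 : int).

Definition zeta (i j : 'I_N) (w : C) : C := 1 + (cartan i j)%:~R / (2%:R * w).

Definition generic (k : grading N) (x : pt C N) : Prop :=
  forall (i j : 'I_N) (r s : nat), (r < k i)%N -> (s < k j)%N ->
    x i r = x j s -> i = j /\ r = s.

Definition eqW (X Y : elt C N) : Prop :=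
  forall (k : grading N) (x : pt C N), generic k x -> X k x = Y k x.

Definition addW (X Y : elt C N) : elt C N := fun k x => X k x + Y k x.
Definition scaleW (c : C) (X : elt C N) : elt C N := fun k x => c * X k x.
Definition oneW : elt C N := fun k x => if k == [ffun => 0%N] then 1 else 0.
Definition genW (i : 'I_N) (r : nat) : elt C N :=
  fun k x => if k == [ffun j => nat_of_bool (j == i)] then x i 0%N ^+ r else 0.

(* The shuffle product.  A (k,l)-shuffle sigma = (sigma_i) is encoded by the sets
   S_i = sigma_i({1..k_i}) of positions of the first k_i variables of colour i. *)
Definition shufW (X Y : elt C N) : elt C N := fun m x =>
  \sum_(S : {ffun 'I_N -> {set 'I_((\sum_(i < N) m i).+1)}} |
          [forall i, S i \subset [set j | (val j < m i)%N]])
    (let k := [ffun i => #|S i|] in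
     let l := [ffun i => (m i - #|S i|)%N] in
     let p1 := fun i => [seq val j | j <- enum (S i)] in
     let p2 := fun i => [seq j <- iota 0 (m i) | j \notin p1 i] in
     let y := fun i r => x i (nth 0%N (p1 i) r) in
     let z := fun i r => x i (nth 0%N (p2 i) r) in
     X k y * Y l z *
     \prod_(i < N) \prod_(j < N) \prod_(r < k i) \prod_(s < l j)
        zeta i j (y i r - z j s)).

Definition vars (k : grading N) : {set 'I_N * 'I_((\sum_(i < N) k i).+1)} :=
  [set p | (val p.2 < k p.1)%N].
Definition polyk (k : grading N) := mpoly #|vars k| C.
Definition evalk (k : grading N) (f : polyk k) (x : pt C N) : C :=
  f.@[fun j => x (enum_val j).1 (val (enum_val j).2)].

Definition permpt (k : grading N) (sigma : forall i : 'I_N, {perm 'I_(k i)})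
  (x : pt C N) : pt C N :=
  fun i r => match (insub r : option 'I_(k i)) with
             | Some r' => x i (val (sigma i r'))
             | None => x i r end.

Definition symk (k : grading N) (f : polyk k) : Prop :=
  forall (sigma : forall i : 'I_N, {perm 'I_(k i)}) (x : pt C N),
    evalk f (permpt sigma x) = evalk f x.

Definition Dk (k : grading N) (x : pt C N) : C :=
  \prod_(i < N) \prod_(j < N | j == i.+1 :> nat)
    \prod_(r < k i) \prod_(s < k j) (x i r - x j s).

Definition wheel (k : grading N) (X : elt C N) : Prop :=
  forall (i j : 'I_N) (r1 r2 s : nat),
    ((j.+1 == i :> nat) || (i.+1 == j :> nat)) ->
    (r1 < k i)%N -> (r2 < k i)%N -> (s < k j)%N -> r1 <> r2 ->
    forall x : pt C N, generic k x ->
      x i r1 = x j s + 2%:R^-1 -> x j s + 2%:R^-1 = x i r2 + 1 ->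
      X k x = 0.

Definition inW (X : elt C N) : Prop :=
  (exists s : seq (grading N), forall k, k \notin s ->
      forall x, generic k x -> X k x = 0) /\
  forall k : grading N,
    (exists f : polyk k, symk f /\
        forall x, generic k x -> X k x = evalk f x / Dk k x) /\
    wheel k X.

Definition dyadic (c : C) : Prop :=
  exists (a : int) (m : nat), c = a%:~R / 2%:R ^+ m.

Definition inbW (X : elt C N) : Prop :=
  inW X /\
  forall k : grading N, exists f : polyk k,
    (forall mm, dyadic f@_mm) /\
    forall x, generic k x -> X k x = evalk f x / Dk k x.

Section Yangian.
Variables (A : algType C) (e : 'I_N -> nat -> A).

Definition commA (a b : A) : A := a * b - b * a.

Definition Yrel : Prop :=
  (forall i j r s,
     commA (e i r.+1) (e j s) - commA (e i r) (e j s.+1) =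
     ((cartan i j)%:~R / 2%:R) *: (e i r * e j s + e j s * e i r)) /\
  (forall i j r s, cartan i j = 0 -> commA (e i r) (e j s) = 0) /\
  (forall i j r1 r2 s, cartan i j = (-1 : int) ->
     commA (e i r1) (commA (e i r2) (e j s)) +
     commA (e i r2) (commA (e i r1) (e j s)) = 0).

Inductive Ysub : A -> Prop :=
| Ysub_gen i r t : Ysub ((t`!%:R)^-1 *: (e i r ^+ t))
| Ysub_one : Ysub 1
| Ysub_add a b : Ysub a -> Ysub b -> Ysub (a + b)
| Ysub_mul a b : Ysub a -> Ysub b -> Ysub (a * b)
| Ysub_scale c a : dyadic c -> Ysub a -> Ysub (c *: a).

Definition Psi_iso (Psi : A -> elt C N) : Prop :=
  (forall a b, eqW (Psi (a + b)) (addW (Psi a) (Psi b))) /\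
  (forall (c : C) a, eqW (Psi (c *: a)) (scaleW c (Psi a))) /\
  (forall a b, eqW (Psi (a * b)) (shufW (Psi a) (Psi b))) /\
  eqW (Psi 1) oneW /\
  (forall i r, eqW (Psi (e i r)) (genW i r)) /\
  (forall a, inW (Psi a)) /\
  (forall a b, eqW (Psi a) (Psi b) -> a = b) /\
  (forall X, inW X -> exists a, eqW (Psi a) X).

End Yangian.
End Defs.

(* Since [Psi] is additive, multiplicative and linear, it suffices to check that
   the numerators of the images of the generators have coefficients in Z[1/2],
   and that this is preserved by sums, dyadic scalars and shuffle products.
   The generator [e_(i,r) ^+ t / t`!] is sent to [prod_(a < t) x_(i,a) ^+ r]:
   multiplying by [e_(i,r)] shuffles in one more variable, and the identity
   [sum_c prod_(b != c) (1 + 1 / (x_b - x_c)) = t.+1] (read off the leading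
   coefficient of a Lagrange interpolation) produces the factor [t.+1].
   Each factor [zeta] of a shuffle product equals [1 + (c_ij / 2) / w], so a
   shuffle product of elements with dyadic numerators is a dyadic polynomial
   divided by a power of the discriminant [prod_(u != w) (x_u - x_w)].  Being in
   W, it is also [f / D] for some polynomial [f]; then [f] times a power of the
   discriminant is dyadic, and dividing by a linear form [x_u - x_w] preserves
   dyadic coefficients (compare coefficients downwards in the degree of [x_u]),
   so [f] is dyadic. *)

From HB Require Import structures.
From mathcomp Require Import all_boot all_order all_algebra all_fingroup.
From mathcomp Require Import reals complex mpoly.
From mathcomp Require Import ring.
Set Implicit Arguments. Unset Strict Implicit. Unset Printing Implicit Defensive.
Import Order.TTheory GRing.Theory Num.Theory.
Local Open Scope ring_scope.

Section Dyadic.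
Variable C : numFieldType.
Implicit Types a b : C.

Lemma dyadic_int (z : int) : dyadic (z%:~R : C).
Proof. by exists z, 0%N; rewrite expr0 divr1. Qed.

Lemma dyadic_nat (k : nat) : dyadic (k%:R : C).
Proof. by have := dyadic_int k; rewrite pmulrn. Qed.

Lemma dyadic0 : dyadic (0 : C). Proof. exact: (dyadic_nat 0). Qed.
Lemma dyadic1 : dyadic (1 : C). Proof. exact: (dyadic_nat 1). Qed.

Lemma dyadic_half : dyadic (2%:R^-1 : C).
Proof. by exists 1%Z, 1%N; rewrite expr1 div1r. Qed.

Lemma two_exp_neq0 m : (2%:R : C) ^+ m != 0.
Proof. by rewrite expf_neq0 // pnatr_eq0. Qed.

Lemma dyadicD a b : dyadic a -> dyadic b -> dyadic (a + b).
Proof.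
move=> [x [m ->]] [y [p ->]]; exists (x * 2 ^+ p + y * 2 ^+ m)%R, (m + p)%N.
rewrite rmorphD !rmorphM /= !rmorphXn /= exprD.
have -> : (2%:~R : C) = 2%:R by [].
by field; rewrite !two_exp_neq0.
Qed.

Lemma dyadicM a b : dyadic a -> dyadic b -> dyadic (a * b).
Proof.
move=> [x [m ->]] [y [p ->]]; exists (x * y)%R, (m + p)%N.
by rewrite rmorphM /= exprD; field; rewrite !two_exp_neq0.
Qed.

Lemma dyadicN a : dyadic a -> dyadic (- a).
Proof. by move=> [x [m ->]]; exists (- x)%R, m; rewrite rmorphN /= mulNr. Qed.

Lemma dyadic_sum I (r : seq I) (P : pred I) (F : I -> C) :
  (forall i, P i -> dyadic (F i)) -> dyadic (\sum_(i <- r | P i) F i).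
Proof. exact: (big_ind (@dyadic C) dyadic0 dyadicD). Qed.

End Dyadic.

Section DyadicMpoly.
Variables (C : numFieldType) (n : nat).
Implicit Types p q f g : {mpoly C[n]}.

Definition dyadic_mpoly p := forall m, dyadic p@_m.

Lemma dyadic_mpoly0 : dyadic_mpoly 0.
Proof. by move=> m; rewrite mcoeff0; apply: dyadic0. Qed.

Lemma dyadic_mpolyC c : dyadic c -> dyadic_mpoly c%:MP.
Proof. by move=> hc m; rewrite mcoeffC; apply/dyadicM/dyadic_nat. Qed.

Lemma dyadic_mpoly1 : dyadic_mpoly 1.
Proof. exact/dyadic_mpolyC/dyadic1. Qed.

Lemma dyadic_mpolyX m0 : dyadic_mpoly 'X_[m0].
Proof. by move=> m; rewrite mcoeffX; apply: dyadic_nat. Qed.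

Lemma dyadic_mpolyD p q : dyadic_mpoly p -> dyadic_mpoly q -> dyadic_mpoly (p + q).
Proof. by move=> hp hq m; rewrite mcoeffD; apply: dyadicD. Qed.

Lemma dyadic_mpolyN p : dyadic_mpoly p -> dyadic_mpoly (- p).
Proof. by move=> hp m; rewrite mcoeffN; apply: dyadicN. Qed.

Lemma dyadic_mpolyB p q : dyadic_mpoly p -> dyadic_mpoly q -> dyadic_mpoly (p - q).
Proof. by move=> hp hq; apply/dyadic_mpolyD/dyadic_mpolyN. Qed.

Lemma dyadic_mpolyM p q : dyadic_mpoly p -> dyadic_mpoly q -> dyadic_mpoly (p * q).
Proof. by move=> hp hq m; rewrite mcoeffM; apply: dyadic_sum => i _; apply: dyadicM. Qed.

Lemma dyadic_mpolyZ c p : dyadic c -> dyadic_mpoly p -> dyadic_mpoly (c *: p).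
Proof. by move=> hc hp m; rewrite mcoeffZ; apply: dyadicM. Qed.

Lemma dyadic_mpoly_prod I (r : seq I) (P : pred I) (F : I -> {mpoly C[n]}) :
  (forall i, P i -> dyadic_mpoly (F i)) -> dyadic_mpoly (\prod_(i <- r | P i) F i).
Proof. exact: (big_ind dyadic_mpoly dyadic_mpoly1 dyadic_mpolyM). Qed.

Lemma mcoeffXUM q (b : 'I_n) m :
  ('X_b * q)@_m = if (0 < m b)%N then q@_(m - U_(b))%MM else 0.
Proof.
case: ifP => hb.
  have le : (U_(b) <= m)%MM by rewrite lep1mP -lt0n.
  by rewrite -{1}(submK le) addmC mulrC mcoeffMX.
apply/eqP; rewrite mcoeff_eq0 mulrC; apply/negP.
have /perm_mem -> := msuppMX q U_(b); move=> /mapP [m' _ e].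
by move: hb; rewrite e mnmDE mnm1E eqxx.
Qed.

Definition dyadic_cancellable f := forall q, dyadic_mpoly (f * q) -> dyadic_mpoly q.

(* [q@_m] is a coefficient of [('X_a - 'X_b) * q] plus a coefficient of [q] of
   higher degree in ['X_a]: induct downwards on that degree. *)
Lemma dyadic_cancellable_XsubX (a b : 'I_n) :
  a != b -> dyadic_cancellable ('X_a - 'X_b).
Proof.
move=> ab q hP.
have coefE m : q@_m = (('X_a - 'X_b) * q)@_(m + U_(a))%MM +
    (if (0 < m b)%N then q@_(m + U_(a) - U_(b))%MM else 0).
  rewrite mulrBl mcoeffB !mcoeffXUM !mnmDE !mnm1E eqxx addn1 /= addmK (negbTE ab).
  by rewrite addn0; case: ifP => _; [rewrite subrK | rewrite subr0 addr0].
suff H d (m : 'X_{1..n}) : (msize q - m a <= d)%N -> dyadic q@_m.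
  by move=> m; apply: H.
elim: d m => [|d ih] m hm.
  suff -> : q@_m = 0 by apply: dyadic0.
  apply/eqP; rewrite mcoeff_eq0 msize_mdeg_ge //.
  apply: (leq_trans (n := m a)); first by rewrite -subn_eq0 -leqn0.
  by rewrite mdegE (bigD1 a) //= leq_addr.
rewrite coefE; apply: dyadicD => //; case: ifP => _; last exact: dyadic0.
apply: ih; rewrite mnmBE mnmDE !mnm1E eqxx eq_sym (negbTE ab) subn0.
by move: hm; rewrite addn1 subnS; case: (msize q - m a)%N.
Qed.

Lemma dyadic_cancellable1 : dyadic_cancellable 1.
Proof. by move=> q; rewrite mul1r. Qed.

Lemma dyadic_cancellableM f g :
  dyadic_cancellable f -> dyadic_cancellable g -> dyadic_cancellable (f * g).
Proof. by move=> hf hg q; rewrite -mulrA => /hf /hg. Qed.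

Lemma dyadic_cancellable_prod I (r : seq I) (P : pred I) (F : I -> {mpoly C[n]}) :
  (forall i, P i -> dyadic_cancellable (F i)) ->
  dyadic_cancellable (\prod_(i <- r | P i) F i).
Proof. exact: (big_ind dyadic_cancellable dyadic_cancellable1 dyadic_cancellableM). Qed.

Lemma dyadic_cancellableX f e : dyadic_cancellable f -> dyadic_cancellable (f ^+ e).
Proof.
move=> hf; elim: e => [|e ih]; first by rewrite expr0; apply: dyadic_cancellable1.
by rewrite exprS; apply: dyadic_cancellableM.
Qed.

End DyadicMpoly.

Section Vanishing.
Variable C : numFieldType.

Lemma poly_vanish_eq0 (G : {poly C}) : (forall t, G.[t] = 0) -> G = 0.
Proof.
move=> hG; apply: (@roots_geq_poly_eq0 _ G [seq (k%:R : C) | k <- iota 0 (size G)]).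
- by apply/allP => _ /mapP [k _ ->]; rewrite /root hG.
- by rewrite map_inj_uniq ?iota_uniq // => a b /eqP; rewrite eqr_nat => /eqP.
- by rewrite size_map size_iota.
Qed.

Variable n : nat.

Definition mnm_init (m : 'X_{1..n.+1}) : 'X_{1..n} :=
  [multinom m (widen_ord (leqnSn n) i) | i < n].

Definition pt_snoc (v : 'I_n -> C) (t : C) : 'I_n.+1 -> C :=
  fun i => if (insub (val i) : option 'I_n) is Some j then v j else t.

Lemma pt_snoc_widen v t (i : 'I_n) : pt_snoc v t (widen_ord (leqnSn n) i) = v i.
Proof. by rewrite /pt_snoc insubT //= => h; congr v; apply: val_inj. Qed.

Lemma pt_snoc_max v t : pt_snoc v t ord_max = t.
Proof. by rewrite /pt_snoc insubN //= ltnn. Qed.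

Lemma mnm_init_inj (m m' : 'X_{1..n.+1}) :
  m ord_max = m' ord_max -> mnm_init m = mnm_init m' -> m = m'.
Proof.
move=> e_last e_init; apply/mnmP => i; case: (ltnP i n) => hi.
  have -> : i = widen_ord (leqnSn n) (Ordinal hi) by apply: val_inj.
  by have := congr1 (fun mm : 'X_{1..n} => mm (Ordinal hi)) e_init; rewrite !mnmE.
have -> // : i = ord_max.
by apply: val_inj; apply/eqP; rewrite eqn_leq hi -ltnS ltn_ord.
Qed.

Lemma mdeg_last_lt (p : {mpoly C[n.+1]}) m : m \in msupp p -> (m ord_max < msize p)%N.
Proof.
move=> hm; apply: leq_ltn_trans (msize_mdeg_lt hm).
by rewrite mdegE (bigD1 ord_max) //= leq_addr.
Qed.

Definition mslice (p : {mpoly C[n.+1]}) (j : nat) : {mpoly C[n]} :=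
  \sum_(m <- msupp p | m ord_max == j) p@_m *: 'X_[mnm_init m].

Lemma meval_pt_snoc (p : {mpoly C[n.+1]}) v t :
  p.@[pt_snoc v t] = \sum_(j < msize p) (mslice p j).@[v] * t ^+ j.
Proof.
transitivity (\sum_(m <- msupp p)
    p@_m * ((\prod_(i < n) v i ^+ mnm_init m i) * t ^+ m ord_max)).
  rewrite mevalE; apply: eq_bigr => m _; congr (_ * _).
  rewrite big_ord_recr /= pt_snoc_max; congr (_ * _).
  by apply: eq_bigr => i _; rewrite pt_snoc_widen mnmE.
transitivity (\sum_(j < msize p) \sum_(m <- msupp p) (if m ord_max == j then
    p@_m * ((\prod_(i < n) v i ^+ mnm_init m i) * t ^+ m ord_max) else 0)).
  rewrite exchange_big /=; apply: eq_big_seq => m hm.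
  rewrite (bigD1 (Ordinal (mdeg_last_lt hm))) //= eqxx [X in _ + X]big1 ?addr0 // => j hj.
  by rewrite ifN //; apply: contra hj => /eqP e; apply/eqP/val_inj; rewrite /= e.
apply: eq_bigr => j _; rewrite raddf_sum /= mulr_suml [RHS]big_mkcond /=.
by apply: eq_bigr => m _; case: eqP => // <-; rewrite mevalZ mevalX mulrA.
Qed.

Lemma mcoeff_mslice (p : {mpoly C[n.+1]}) m :
  (mslice p (m ord_max))@_(mnm_init m) = p@_m.
Proof.
rewrite raddf_sum /= big_mkcond /=.
under eq_bigr => m' _ do rewrite mcoeffZ mcoeffX.
case: (boolP (m \in msupp p)) => hm.
  rewrite (bigD1_seq m) ?msupp_uniq //= !eqxx mulr1 big1 ?addr0 // => m' hm'.
  case: eqP => // e1; case: eqP; rewrite ?mulr0 // => e2.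
  by move: hm' => /eqP []; apply: mnm_init_inj.
rewrite big1_seq; first by apply/esym/eqP; rewrite mcoeff_eq0.
move=> m' /andP [_ hm']; case: eqP => // e1; case: eqP; rewrite ?mulr0 // => e2.
by move: hm; rewrite -(mnm_init_inj e1 e2) hm'.
Qed.

End Vanishing.

Lemma mpoly_vanish_eq0 (C : numFieldType) n (p : {mpoly C[n]}) :
  (forall v, p.@[v] = 0) -> p = 0.
Proof.
elim: n p => [|n ih] p hp.
  by have := hp (fun _ => 0); rewrite (nvar0_mpolyC p) mevalC => ->.
have slice0 j : (j < msize p)%N -> mslice p j = 0.
  move=> hj; apply: ih => v.
  have := congr1 (fun G : {poly C} => G`_j)
    (poly_vanish_eq0 (G := \poly_(i < msize p) (mslice p i).@[v]) _).
  by rewrite coef_poly hj coef0; apply => t; rewrite horner_poly -meval_pt_snoc hp.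
apply/mpolyP => m; rewrite mcoeff0 -mcoeff_mslice.
case: (ltnP (m ord_max) (msize p)) => hm; first by rewrite slice0 // mcoeff0.
rewrite /mslice big_seq_cond big_pred0 ?mcoeff0 // => m'.
apply/negbTE; rewrite negb_and -implybE; apply/implyP => /mdeg_last_lt.
by apply: contraTneq => ->; rewrite -leqNgt.
Qed.

Section Coordinates.
Variables (C : numFieldType) (N : nat).
Implicit Types (m k : grading N) (x : pt C N).

Definition coords m x : 'I_#|vars m| -> C :=
  fun u => x (enum_val u).1 (val (enum_val u).2).
Arguments coords m x : clear implicits.

Lemma coords_lt m (u : 'I_#|vars m|) : (val (enum_val u).2 < m (enum_val u).1)%N.
Proof. by have := enum_valP u; rewrite inE. Qed.

Lemma leq_grading_sum m (i : 'I_N) : (m i <= \sum_(j < N) m j)%N.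
Proof. by rewrite (bigD1 i) //= leq_addr. Qed.

Section VarRank.
Variables (m : grading N) (i : 'I_N) (r : nat) (hr : (r < m i)%N).

Let r_ord : 'I_(\sum_(j < N) m j).+1 :=
  Ordinal (leq_trans hr (leq_trans (leq_grading_sum m i) (leqnSn _))).

Let in_vars : (i, r_ord) \in vars m. Proof. by rewrite inE. Qed.

Definition var_rank : 'I_#|vars m| := enum_rank_in in_vars (i, r_ord).

Lemma var_rankE : enum_val var_rank = (i, r_ord).
Proof. exact: enum_rankK_in. Qed.

Lemma coords_var_rank x : coords m x var_rank = x i r.
Proof. by rewrite /coords var_rankE. Qed.

End VarRank.

Lemma var_rank_inj m i j r s (hr : (r < m i)%N) (hs : (s < m j)%N) :
  var_rank hr = var_rank hs -> i = j /\ r = s.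
Proof. by move=> /(congr1 enum_val); rewrite !var_rankE => -[-> ->]. Qed.

Definition dyadic_polyfun m (F : pt C N -> C) :=
  exists f : {mpoly C[#|vars m|]}, dyadic_mpoly f /\ forall x, F x = f.@[coords m x].

Lemma dyadic_polyfun_ext m F G :
  (forall x, F x = G x) -> dyadic_polyfun m G -> dyadic_polyfun m F.
Proof. by move=> e [f [hf ef]]; exists f; split => // x; rewrite e. Qed.

Lemma dyadic_polyfun_const m c : dyadic c -> dyadic_polyfun m (fun _ => c).
Proof.
by move=> hc; exists c%:MP; split; [apply: dyadic_mpolyC | move=> x; rewrite mevalC].
Qed.

Lemma dyadic_polyfun_coords m u : dyadic_polyfun m (fun x => coords m x u).
Proof. by exists 'X_u; split; [apply: dyadic_mpolyX | move=> x; rewrite mevalXU]. Qed.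

Lemma dyadic_polyfunD m F G :
  dyadic_polyfun m F -> dyadic_polyfun m G -> dyadic_polyfun m (fun x => F x + G x).
Proof.
move=> [f [hf ef]] [g [hg eg]]; exists (f + g); split; first exact: dyadic_mpolyD.
by move=> x; rewrite mevalD ef eg.
Qed.

Lemma dyadic_polyfunM m F G :
  dyadic_polyfun m F -> dyadic_polyfun m G -> dyadic_polyfun m (fun x => F x * G x).
Proof.
move=> [f [hf ef]] [g [hg eg]]; exists (f * g); split; first exact: dyadic_mpolyM.
by move=> x; rewrite mevalM ef eg.
Qed.

Lemma dyadic_polyfunB m F G :
  dyadic_polyfun m F -> dyadic_polyfun m G -> dyadic_polyfun m (fun x => F x - G x).
Proof.
move=> [f [hf ef]] [g [hg eg]]; exists (f - g); split; first exact: dyadic_mpolyB.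
by move=> x; rewrite mevalB ef eg.
Qed.

Lemma dyadic_polyfun_big m (op : C -> C -> C) (idx : C) I (r : seq I) (P : pred I)
    (F : I -> pt C N -> C) :
  dyadic idx ->
  (forall G H, dyadic_polyfun m G -> dyadic_polyfun m H ->
     dyadic_polyfun m (fun x => op (G x) (H x))) ->
  (forall i, P i -> dyadic_polyfun m (F i)) ->
  dyadic_polyfun m (fun x => \big[op/idx]_(i <- r | P i) F i x).
Proof.
move=> hidx hop hF; elim: r => [|a r ih].
  by apply: dyadic_polyfun_ext (dyadic_polyfun_const m hidx) => x; rewrite big_nil.
case: (boolP (P a)) => hPa.
  by apply: dyadic_polyfun_ext (hop _ _ (hF a hPa) ih) => x; rewrite big_cons hPa.
by apply: dyadic_polyfun_ext ih => x; rewrite big_cons (negbTE hPa).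
Qed.

Lemma dyadic_polyfun_sum m I (r : seq I) (P : pred I) (F : I -> pt C N -> C) :
  (forall i, P i -> dyadic_polyfun m (F i)) ->
  dyadic_polyfun m (fun x => \sum_(i <- r | P i) F i x).
Proof. exact/dyadic_polyfun_big/dyadic_polyfunD/dyadic0. Qed.

Lemma dyadic_polyfun_prod m I (r : seq I) (P : pred I) (F : I -> pt C N -> C) :
  (forall i, P i -> dyadic_polyfun m (F i)) ->
  dyadic_polyfun m (fun x => \prod_(i <- r | P i) F i x).
Proof. exact/dyadic_polyfun_big/dyadic_polyfunM/dyadic1. Qed.

Lemma dyadic_polyfunX m F e : dyadic_polyfun m F -> dyadic_polyfun m (fun x => F x ^+ e).
Proof.
move=> hF; elim: e => [|e ih].
  by apply: dyadic_polyfun_ext (dyadic_polyfun_const m (dyadic1 C)) => x; rewrite expr0.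
by apply: dyadic_polyfun_ext (dyadic_polyfunM hF ih) => x; rewrite exprS.
Qed.

Lemma dyadic_polyfun_var m (i : 'I_N) r : (r < m i)%N -> dyadic_polyfun m (fun x => x i r).
Proof.
move=> hr; apply: dyadic_polyfun_ext (dyadic_polyfun_coords (var_rank hr)) => x.
by rewrite coords_var_rank.
Qed.

Lemma dyadic_polyfun_meval m k (f : {mpoly C[#|vars k|]}) (phi : 'I_N -> nat -> nat) :
  dyadic_mpoly f -> (forall i r, (r < k i)%N -> (phi i r < m i)%N) ->
  dyadic_polyfun m (fun x => f.@[coords k (fun i r => x i (phi i r))]).
Proof.
move=> hf hphi; apply: (dyadic_polyfun_ext (G := fun x => \sum_(mu <- msupp f) f@_mu *
    \prod_(u < #|vars k|) coords k (fun i r => x i (phi i r)) u ^+ mu u)) => [x|].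
  by rewrite mevalE.
apply: dyadic_polyfun_sum => mu _; apply: dyadic_polyfunM; first exact: dyadic_polyfun_const.
apply: dyadic_polyfun_prod => u _; apply: dyadic_polyfunX.
exact/dyadic_polyfun_var/hphi/coords_lt.
Qed.

End Coordinates.
Arguments coords {C N} m x.

Section Discriminant.
Variables (C : numFieldType) (N : nat).
Implicit Types (m : grading N) (x : pt C N).

Lemma XsubX_neq0 n (u w : 'I_n) : w != u -> ('X_u - 'X_w : {mpoly C[n]}) != 0.
Proof.
move=> wu; apply/eqP => /(congr1 (mcoeff U_(u))).
by rewrite mcoeffB !mcoeffXU eqxx mcoeff0 (negbTE wu) subr0 => /eqP; rewrite oner_eq0.
Qed.

Definition disc_mpoly m : {mpoly C[#|vars m|]} :=
  \prod_(u : 'I_#|vars m|) \prod_(w | w != u) ('X_u - 'X_w).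

Definition disc m x : C := (disc_mpoly m).@[coords m x].

Lemma discE m x :
  disc m x = \prod_(u : 'I_#|vars m|) \prod_(w | w != u) (coords m x u - coords m x w).
Proof.
rewrite /disc rmorph_prod /=; apply: eq_bigr => u _.
by rewrite rmorph_prod /=; apply: eq_bigr => w _; rewrite mevalB !mevalXU.
Qed.

Lemma disc_mpoly_neq0 m : disc_mpoly m != 0.
Proof. by apply/prodf_neq0 => u _; apply/prodf_neq0 => w; apply: XsubX_neq0. Qed.

Lemma dyadic_polyfun_disc m : dyadic_polyfun m (disc m).
Proof.
exists (disc_mpoly m); split => //.
by do 2![apply: dyadic_mpoly_prod => ? _]; apply: dyadic_mpolyB; apply: dyadic_mpolyX.
Qed.

Lemma dyadic_cancellable_disc m : dyadic_cancellable (disc_mpoly m).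
Proof.
apply: dyadic_cancellable_prod => u _; apply: dyadic_cancellable_prod => w wu.
by apply: dyadic_cancellable_XsubX; rewrite eq_sym.
Qed.

Lemma disc_neq0_generic m x : disc m x != 0 -> generic m x.
Proof.
move=> hx i j r s hr hs e.
have [/var_rank_inj //|hne] := eqVneq (var_rank hr) (var_rank hs).
move/negP: hx; case; rewrite discE; apply/prodf_eq0; exists (var_rank hr) => //.
apply/prodf_eq0; exists (var_rank hs); first by rewrite eq_sym.
by rewrite !coords_var_rank e subrr.
Qed.

Definition pt_of_coords m (v : 'I_#|vars m| -> C) : pt C N := fun i r =>
  if [pick u | ((enum_val u).1 == i) && (val (enum_val u).2 == r)] is Some u
  then v u else 0.

Lemma coords_pt_of_coords m v : coords m (pt_of_coords v) =1 v.
Proof.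
move=> u; rewrite /coords /pt_of_coords; case: pickP => [u' /andP [/eqP e1 /eqP e2]|].
  congr v; apply: enum_val_inj; case: (enum_val u') e1 e2 => a b /= -> e2.
  by case: (enum_val u) e2 => c d /= e2; congr pair; apply: val_inj.
by move=> /(_ u); rewrite !eqxx.
Qed.

(* Multiplying by the discriminant kills the non-generic points. *)
Lemma mpoly_eq_generic m (q1 q2 : {mpoly C[#|vars m|]}) :
  (forall x, generic m x -> q1.@[coords m x] = q2.@[coords m x]) -> q1 = q2.
Proof.
move=> h; apply/subr0_eq/eqP.
suff : (q1 - q2) * disc_mpoly m == 0 by rewrite mulf_eq0 (negbTE (disc_mpoly_neq0 m)) orbF.
apply/eqP/mpoly_vanish_eq0 => v.
rewrite -(meval_eq _ (coords_pt_of_coords v)) mevalM -/(disc _ _) mevalB.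
have [->|/disc_neq0_generic hx] := eqVneq (disc m (pt_of_coords v)) 0.
  by rewrite mulr0.
by rewrite h // subrr mul0r.
Qed.

End Discriminant.
Arguments disc_mpoly {C N} m.

Section DiscFrac.
Variables (C : numFieldType) (N : nat).
Implicit Types (m : grading N) (x : pt C N).

Definition disc_frac m (F : pt C N -> C) :=
  exists e P, dyadic_polyfun m P /\ forall x, generic m x -> F x * disc m x ^+ e = P x.

Lemma disc_frac_ext m F G :
  (forall x, generic m x -> F x = G x) -> disc_frac m G -> disc_frac m F.
Proof. by move=> eFG [e [P [hP eP]]]; exists e, P; split => // x hx; rewrite eFG // eP. Qed.

Lemma disc_frac_polyfun m F : dyadic_polyfun m F -> disc_frac m F.
Proof. by move=> hF; exists 0%N, F; split => // x _; rewrite expr0 mulr1. Qed.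

Lemma disc_fracD m F G :
  disc_frac m F -> disc_frac m G -> disc_frac m (fun x => F x + G x).
Proof.
move=> [e1 [P1 [h1 E1]]] [e2 [P2 [h2 E2]]].
exists (e1 + e2)%N, (fun x => P1 x * disc m x ^+ e2 + P2 x * disc m x ^+ e1); split.
  by apply: dyadic_polyfunD; apply: dyadic_polyfunM => //;
    apply/dyadic_polyfunX/dyadic_polyfun_disc.
by move=> x hx; rewrite -E1 // -E2 // exprD; ring.
Qed.

Lemma disc_fracM m F G :
  disc_frac m F -> disc_frac m G -> disc_frac m (fun x => F x * G x).
Proof.
move=> [e1 [P1 [h1 E1]]] [e2 [P2 [h2 E2]]].
exists (e1 + e2)%N, (fun x => P1 x * P2 x); split; first exact: dyadic_polyfunM.
by move=> x hx; rewrite -E1 // -E2 // exprD; ring.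
Qed.

Lemma disc_frac_big m (op : C -> C -> C) (idx : C) I (r : seq I) (P : pred I)
    (F : I -> pt C N -> C) :
  dyadic idx ->
  (forall G H, disc_frac m G -> disc_frac m H -> disc_frac m (fun x => op (G x) (H x))) ->
  (forall i, P i -> disc_frac m (F i)) ->
  disc_frac m (fun x => \big[op/idx]_(i <- r | P i) F i x).
Proof.
move=> hidx hop hF; elim: r => [|a r ih].
  apply: disc_frac_ext (disc_frac_polyfun (dyadic_polyfun_const m hidx)) => x _.
  by rewrite big_nil.
case: (boolP (P a)) => hPa.
  by apply: disc_frac_ext (hop _ _ (hF a hPa) ih) => x _; rewrite big_cons hPa.
by apply: disc_frac_ext ih => x _; rewrite big_cons (negbTE hPa).
Qed.

Lemma disc_frac_sum m I (r : seq I) (P : pred I) (F : I -> pt C N -> C) :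
  (forall i, P i -> disc_frac m (F i)) -> disc_frac m (fun x => \sum_(i <- r | P i) F i x).
Proof. exact/disc_frac_big/disc_fracD/dyadic0. Qed.

Lemma disc_frac_prod m I (r : seq I) (P : pred I) (F : I -> pt C N -> C) :
  (forall i, P i -> disc_frac m (F i)) -> disc_frac m (fun x => \prod_(i <- r | P i) F i x).
Proof. exact/disc_frac_big/disc_fracM/dyadic1. Qed.

Lemma disc_frac_prodV m I (r : seq I) (P : pred I) (F : I -> pt C N -> C) :
  (forall i, P i -> disc_frac m (fun x => (F i x)^-1)) ->
  disc_frac m (fun x => (\prod_(i <- r | P i) F i x)^-1).
Proof.
move=> hF; apply: disc_frac_ext (@disc_frac_prod m I r P (fun i x => (F i x)^-1) hF) => x _.
by rewrite prodfV.
Qed.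

(* The witness is [disc m] with its factor [x i a - x j b] removed. *)
Lemma disc_frac_inv_sub m (i j : 'I_N) a b (ha : (a < m i)%N) (hb : (b < m j)%N) :
  (i, a) != (j, b) -> disc_frac m (fun x => (x i a - x j b)^-1).
Proof.
move=> hne; set u := var_rank ha; set w := var_rank hb.
have wu : w != u by apply: contra hne => /eqP /var_rank_inj [-> ->].
exists 1%N, (fun x => \prod_(w' | (w' != u) && (w' != w)) (coords m x u - coords m x w') *
   \prod_(u' | u' != u) \prod_(w' | w' != u') (coords m x u' - coords m x w')); split.
  by apply: dyadic_polyfunM; do ![apply: dyadic_polyfun_prod => ? _];
    apply: dyadic_polyfunB; apply: dyadic_polyfun_coords.
move=> x hx; rewrite expr1 discE (bigD1 u) //= (bigD1 w) //= !coords_var_rank.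
have nz : x i a - x j b != 0.
  by rewrite subr_eq0; apply: contra hne => /eqP /(hx _ _ _ _ ha hb) [-> ->].
by rewrite !mulrA mulVf // mul1r.
Qed.

Lemma Dk_neq0 m x : generic m x -> Dk m x != 0.
Proof.
move=> hx; apply/prodf_neq0 => i _; apply/prodf_neq0 => j /eqP ji.
apply/prodf_neq0 => r _; apply/prodf_neq0 => s _; rewrite subr_eq0.
apply/eqP => /(hx _ _ _ _ (ltn_ord r) (ltn_ord s)) [ij _].
by move: ji; rewrite ij => /eqP; rewrite eqn_leq ltnn andbF.
Qed.

Lemma dyadic_polyfun_Dk m : dyadic_polyfun m (@Dk C N m).
Proof.
do 4![apply: dyadic_polyfun_prod => ? _].
by apply: dyadic_polyfunB; apply: dyadic_polyfun_var.
Qed.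

Definition dyadic_numer (X : elt C N) := forall k, exists f : {mpoly C[#|vars k|]},
  dyadic_mpoly f /\ forall x, generic k x -> X k x = f.@[coords k x] / Dk k x.

Lemma dyadic_numer_eqW X Y : eqW X Y -> dyadic_numer Y -> dyadic_numer X.
Proof.
move=> eXY hY k; have [f [hf ef]] := hY k.
by exists f; split => // x hx; rewrite eXY // ef.
Qed.

Lemma dyadic_numer_polyfun (X : elt C N) :
  (forall k, exists P, dyadic_polyfun k P /\ forall x, generic k x -> X k x * Dk k x = P x) ->
  dyadic_numer X.
Proof.
move=> hX k; have [P [[f [hf ef]] eP]] := hX k; exists f; split => // x hx.
by rewrite -ef -eP // mulfK // Dk_neq0.
Qed.

(* The numerator [f] given by [inW X] satisfies [f * disc ^+ e = P * Dk] with [P]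
   dyadic, and the discriminant is dyadic-cancellable. *)
Lemma dyadic_numer_disc_frac (X : elt C N) :
  inW X -> (forall m, disc_frac m (X m)) -> dyadic_numer X.
Proof.
move=> [_ hW] hX k; have [[f [_ ef]] _] := hW k; have [e [P [hP eP]]] := hX k.
have [g [hg eg]] := dyadic_polyfunM hP (dyadic_polyfun_Dk k).
have fg : disc_mpoly k ^+ e * f = g.
  apply: mpoly_eq_generic => x hx; rewrite mevalM rmorphXn /= -/(disc _ _) -eg -eP //.
  by rewrite (ef x hx) mulrC mulrAC divfK // Dk_neq0.
exists f; split => //; move: hg; rewrite -fg.
exact: (dyadic_cancellableX (e := e) (@dyadic_cancellable_disc C N k)).
Qed.

End DiscFrac.

Section ShuffleData.
Variables (N : nat) (m : grading N).
Variable S : {ffun 'I_N -> {set 'I_((\sum_(i < N) m i).+1)}}.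
Hypothesis hS : [forall i, S i \subset [set j | (val j < m i)%N]].

Definition shuf_pos1 i := [seq val j | j <- enum (S i)].
Definition shuf_pos2 i := [seq j <- iota 0 (m i) | j \notin shuf_pos1 i].
Definition shuf_deg1 : grading N := [ffun i => #|S i|].
Definition shuf_deg2 : grading N := [ffun i => (m i - #|S i|)%N].
Definition shuf_idx1 i r := nth 0%N (shuf_pos1 i) r.
Definition shuf_idx2 i r := nth 0%N (shuf_pos2 i) r.

Lemma size_shuf_pos1 i : size (shuf_pos1 i) = shuf_deg1 i.
Proof. by rewrite size_map ffunE cardE. Qed.

Lemma uniq_shuf_pos1 i : uniq (shuf_pos1 i).
Proof. by rewrite map_inj_uniq ?enum_uniq //; apply: val_inj. Qed.

Lemma shuf_pos1_lt i a : a \in shuf_pos1 i -> (a < m i)%N.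
Proof.
move=> /mapP [j]; rewrite mem_enum => hj ->.
by have /subsetP /(_ _ hj) := forallP hS i; rewrite inE.
Qed.

Lemma uniq_shuf_pos2 i : uniq (shuf_pos2 i).
Proof. by rewrite filter_uniq ?iota_uniq. Qed.

Lemma mem_shuf_pos2 i a : (a \in shuf_pos2 i) = (a < m i)%N && (a \notin shuf_pos1 i).
Proof. by rewrite mem_filter mem_iota add0n andbC. Qed.

Lemma size_shuf_pos2 i : size (shuf_pos2 i) = shuf_deg2 i.
Proof.
have := count_predC (mem (shuf_pos1 i)) (iota 0 (m i)); rewrite size_iota => hm.
have -> : shuf_deg2 i = (m i - size (shuf_pos1 i))%N by rewrite size_shuf_pos1 !ffunE.
rewrite size_filter -[in RHS]hm.
suff -> : count (mem (shuf_pos1 i)) (iota 0 (m i)) = size (shuf_pos1 i) by rewrite addKn.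
rewrite -size_filter; apply: perm_size; apply: uniq_perm.
- by rewrite filter_uniq ?iota_uniq.
- exact: uniq_shuf_pos1.
move=> a; rewrite mem_filter mem_iota add0n /=; apply/andP/idP => [[]//|ha].
by split => //; apply: shuf_pos1_lt.
Qed.

Lemma shuf_idx1_lt i r : (r < shuf_deg1 i)%N -> (shuf_idx1 i r < m i)%N.
Proof. by move=> hr; apply/shuf_pos1_lt/mem_nth; rewrite size_shuf_pos1. Qed.

Lemma shuf_idx2_lt i r : (r < shuf_deg2 i)%N -> (shuf_idx2 i r < m i)%N.
Proof.
rewrite -size_shuf_pos2 => /(mem_nth 0%N).
by rewrite mem_shuf_pos2 => /andP [].
Qed.

Lemma shuf_idx1_neq_idx2 i r s :
  (r < shuf_deg1 i)%N -> (s < shuf_deg2 i)%N -> shuf_idx1 i r != shuf_idx2 i s.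
Proof.
move=> hr; rewrite -size_shuf_pos2 => /(mem_nth 0%N); rewrite -/(shuf_idx2 i s).
apply: contraTneq => <-.
by rewrite mem_shuf_pos2 mem_nth ?size_shuf_pos1 // andbF.
Qed.

Lemma shuf_deg1_le i : (shuf_deg1 i <= m i)%N.
Proof.
rewrite -size_shuf_pos1 -(size_iota 0 (m i)).
apply: uniq_leq_size (uniq_shuf_pos1 i) _ => b hb.
by rewrite mem_iota add0n shuf_pos1_lt.
Qed.

Lemma shuf_degD i : (shuf_deg1 i + shuf_deg2 i)%N = m i.
Proof.
have -> : shuf_deg2 i = (m i - shuf_deg1 i)%N by rewrite !ffunE.
by rewrite subnKC // shuf_deg1_le.
Qed.

Lemma generic_shuf1 (C : fieldType) (x : pt C N) :
  generic m x -> generic shuf_deg1 (fun i r => x i (shuf_idx1 i r)).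
Proof.
move=> hx i j r s hr hs /(hx _ _ _ _ (shuf_idx1_lt hr) (shuf_idx1_lt hs)) [ij e].
subst j; split => //; apply/eqP.
by rewrite -(nth_uniq 0%N _ _ (uniq_shuf_pos1 i)) ?size_shuf_pos1 //; apply/eqP.
Qed.

Lemma generic_shuf2 (C : fieldType) (x : pt C N) :
  generic m x -> generic shuf_deg2 (fun i r => x i (shuf_idx2 i r)).
Proof.
move=> hx i j r s hr hs /(hx _ _ _ _ (shuf_idx2_lt hr) (shuf_idx2_lt hs)) [ij e].
subst j; split => //; apply/eqP.
by rewrite -(nth_uniq 0%N _ _ (uniq_shuf_pos2 i)) ?size_shuf_pos2 //; apply/eqP.
Qed.

End ShuffleData.

Section ShuffleFrac.
Variables (C : numFieldType) (N : nat).
Implicit Types (m k : grading N) (x : pt C N).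

Definition shuf_term (X Y : elt C N) m x
    (S : {ffun 'I_N -> {set 'I_((\sum_(i < N) m i).+1)}}) : C :=
  X (shuf_deg1 S) (fun i r => x i (shuf_idx1 S i r)) *
  Y (shuf_deg2 S) (fun i r => x i (shuf_idx2 S i r)) *
  \prod_(i < N) \prod_(j < N) \prod_(r < shuf_deg1 S i) \prod_(s < shuf_deg2 S j)
     zeta i j (x i (shuf_idx1 S i r) - x j (shuf_idx2 S j s)).
Arguments shuf_term X Y m x S : clear implicits.

Lemma shufWE (X Y : elt C N) m x : shufW X Y m x =
  \sum_(S : {ffun 'I_N -> {set 'I_((\sum_(i < N) m i).+1)}} |
         [forall i, S i \subset [set j | (val j < m i)%N]]) shuf_term X Y m x S.
Proof. by []. Qed.

Lemma disc_frac_zeta m (i j : 'I_N) a b (ha : (a < m i)%N) (hb : (b < m j)%N) :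
  (i, a) != (j, b) -> disc_frac m (fun x => zeta i j (x i a - x j b)).
Proof.
move=> hne; apply: (disc_frac_ext
  (G := fun x => 1 + ((cartan i j)%:~R / 2%:R) * (x i a - x j b)^-1)).
  by move=> x _; rewrite /zeta invfM mulrA.
apply: disc_fracD; first exact/disc_frac_polyfun/dyadic_polyfun_const/dyadic1.
apply: disc_fracM; last exact: disc_frac_inv_sub.
exact/disc_frac_polyfun/dyadic_polyfun_const/dyadicM/dyadic_half/dyadic_int.
Qed.

Lemma disc_frac_numer_comp m k (f : {mpoly C[#|vars k|]}) (phi : 'I_N -> nat -> nat) :
  dyadic_mpoly f -> (forall i r, (r < k i)%N -> (phi i r < m i)%N) ->
  disc_frac m (fun x => let y := fun i r => x i (phi i r) in
                        f.@[coords k y] / Dk k y).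
Proof.
move=> hf hphi; apply: disc_fracM; first exact/disc_frac_polyfun/dyadic_polyfun_meval.
apply: disc_frac_prodV => i _; apply: disc_frac_prodV => j /eqP ji.
do 2![apply: disc_frac_prodV => ? _]; apply: disc_frac_inv_sub; try exact/hphi/ltn_ord.
by apply/eqP => -[ij _]; move/eqP: ji; rewrite ij eqn_leq ltnn andbF.
Qed.

Lemma disc_frac_shufW (X Y : elt C N) :
  dyadic_numer X -> dyadic_numer Y -> forall m, disc_frac m (shufW X Y m).
Proof.
move=> hX hY m; apply: (disc_frac_ext (fun x _ => shufWE X Y m x)).
apply: disc_frac_sum => S hS; rewrite /shuf_term.
have [f [hf ef]] := hX (shuf_deg1 S); have [g [hg eg]] := hY (shuf_deg2 S).
set y := fun x (i : 'I_N) r => x i (shuf_idx1 S i r).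
set z := fun x (i : 'I_N) r => x i (shuf_idx2 S i r).
apply: (disc_frac_ext (G := fun x =>
   f.@[coords (shuf_deg1 S) (y x)] / Dk (shuf_deg1 S) (y x) *
   (g.@[coords (shuf_deg2 S) (z x)] / Dk (shuf_deg2 S) (z x)) *
   \prod_(i < N) \prod_(j < N) \prod_(r < shuf_deg1 S i) \prod_(s < shuf_deg2 S j)
     zeta i j (y x i r - z x j s))).
  by move=> x hx; rewrite (ef _ (generic_shuf1 hS hx)) (eg _ (generic_shuf2 hS hx)).
apply: disc_fracM; first apply: disc_fracM.
- by apply: disc_frac_numer_comp => // i r; apply: shuf_idx1_lt.
- by apply: disc_frac_numer_comp => // i r; apply: shuf_idx2_lt.
apply: disc_frac_prod => i _; apply: disc_frac_prod => j _.
apply: disc_frac_prod => r _; apply: disc_frac_prod => s _.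
apply: disc_frac_zeta; [exact: shuf_idx1_lt | exact: shuf_idx2_lt |].
apply/eqP => -[ij]; move: s; rewrite -ij => s.
by apply/eqP; apply: shuf_idx1_neq_idx2.
Qed.

End ShuffleFrac.
Arguments shuf_term {C N} X Y m x S.

Section LagrangeIdentity.
Variables (F : fieldType) (n : nat) (x : 'I_n.+1 -> F).
Hypothesis x_inj : injective x.

Lemma size_prod_XsubC_ord (n' : nat) (P : pred 'I_n') (y : 'I_n' -> F) :
  size (\prod_(a < n' | P a) ('X - (y a)%:P)) = #|P|.+1.
Proof.
rewrite -big_filter -(big_map y xpredT (fun z => 'X - z%:P)) size_prod_XsubC size_map.
by rewrite cardE /enum_mem [index_enum _]unlock.
Qed.

Lemma size_prod_XsubC_neq (c : 'I_n.+1) :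
  size (\prod_(b < n.+1 | b != c) ('X - (x b)%:P)) = n.+1.
Proof. by rewrite size_prod_XsubC_ord cardC1 card_ord. Qed.

Lemma horner_prod_XsubC_ord (n' : nat) (P : pred 'I_n') (y : 'I_n' -> F) t :
  (\prod_(a < n' | P a) ('X - (y a)%:P)).[t] = \prod_(a < n' | P a) (t - y a).
Proof. by rewrite horner_prod; apply: eq_bigr => a _; rewrite hornerXsubC. Qed.

Lemma lagrange_interpolation (p : {poly F}) : (size p <= n.+1)%N ->
  p = \sum_(c < n.+1) (p.[x c] / \prod_(b < n.+1 | b != c) (x c - x b)) *:
        \prod_(b < n.+1 | b != c) ('X - (x b)%:P).
Proof.
move=> sp; apply/eqP; rewrite -subr_eq0; apply/eqP.
apply: (@roots_geq_poly_eq0 _ _ [seq x a | a <- enum 'I_n.+1]).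
- apply/allP => _ /mapP [a _ ->]; rewrite /root hornerD hornerN horner_sum.
  rewrite (bigD1 a) //= [\sum_(i < n.+1 | i != a) _]big1 => [|c ca].
    rewrite hornerZ horner_prod_XsubC_ord addr0 divfK ?subrr //; apply/prodf_neq0 => b ba.
    by rewrite subr_eq0 (inj_eq x_inj) eq_sym.
  rewrite hornerZ horner_prod_XsubC_ord [X in _ * X](bigD1 a) 1?eq_sym //=.
  by rewrite subrr mul0r mulr0.
- by rewrite map_inj_uniq ?enum_uniq.
rewrite size_map size_enum_ord; apply: leq_trans (size_add _ _) _.
rewrite size_polyN geq_max sp; apply/leq_sizeP => j hj.
by rewrite coef_sum big1 // => c _; rewrite coefZ nth_default ?mulr0 ?size_prod_XsubC_neq.
Qed.

Lemma coef_lagrange (p : {poly F}) : (size p <= n.+1)%N ->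
  p`_n = \sum_(c < n.+1) p.[x c] / \prod_(b < n.+1 | b != c) (x c - x b).
Proof.
move=> /lagrange_interpolation {1}->; rewrite coef_sum; apply: eq_bigr => c _.
have /monicP := @monic_prod_XsubC _ _ (index_enum _) (fun b => b != c) x.
by rewrite coefZ /lead_coef size_prod_XsubC_neq => ->; rewrite mulr1.
Qed.

(* Take [p = prod_a ('X - x a - 1) - prod_a ('X - x a)], of degree at most [n]:
   its coefficient of ['X^n] is [- n.+1], and [p.[x c]] is
   [- prod_(b != c) (x c - x b - 1)]. *)
Lemma sum_prod_1_add_inv_sub :
  \sum_(c < n.+1) \prod_(b < n.+1 | b != c) (1 + (x b - x c)^-1) = n.+1%:R.
Proof.
pose Q (y : 'I_n.+1 -> F) := \prod_(a < n.+1) ('X - (y a)%:P).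
pose p := Q (fun a => x a + 1) - Q x.
have coefQn y : (Q y)`_n = - \sum_(a < n.+1) y a.
  have hs : size (index_enum 'I_n.+1) = n.+1.
    by rewrite [index_enum _]unlock -enumT size_enum_ord.
  have := @coefPn_prod_XsubC F [seq y a | a <- index_enum 'I_n.+1].
  by rewrite size_map hs /= !big_map; apply.
have coefQ1 y : (Q y)`_n.+1 = 1.
  have /monicP : Q y \is monic by apply: monic_prod_XsubC.
  by rewrite /lead_coef size_prod_XsubC_ord card_ord.
have sp : (size p <= n.+1)%N.
  apply/leq_sizeP => j hj; rewrite coefB.
  case: (ltngtP j n.+1) => [|hj'|->]; first by rewrite ltnNge hj.
    by rewrite !nth_default ?subrr // size_prod_XsubC_ord card_ord.
  by rewrite !coefQ1 subrr.
have px c : p.[x c] = - \prod_(b < n.+1 | b != c) (x c - x b - 1).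
  rewrite hornerD hornerN !horner_prod_XsubC_ord (bigD1 c) //= [X in _ - X](bigD1 c) //=.
  rewrite subrr mul0r subr0 (_ : x c - (x c + 1) = -1); last by ring.
  by rewrite mulN1r; congr (- _); apply: eq_bigr => b _; ring.
have coefpn : p`_n = - n.+1%:R.
  by rewrite coefB !coefQn big_split /= sumr_const card_ord; ring.
apply: oppr_inj; rewrite -sumrN -coefpn (coef_lagrange sp).
apply: eq_bigr => c _; rewrite px mulNr -prodf_div.
congr (- _); apply: eq_bigr => b bc.
have nz : x b - x c != 0 by rewrite subr_eq0 (inj_eq x_inj).
have nz' : x c - x b != 0 by rewrite subr_eq0 (inj_eq x_inj) eq_sym.
by field; rewrite nz nz'.
Qed.

End LagrangeIdentity.

Definition pure_grading N (i0 : 'I_N) (s : nat) : grading N := [ffun j => (s * (j == i0))%N].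

Lemma pure_grading_diag N (i0 : 'I_N) s : pure_grading i0 s i0 = s.
Proof. by rewrite ffunE eqxx muln1. Qed.

Lemma prod_pure_grading (R : comPzRingType) N (i0 : 'I_N) s
    (F : forall i : 'I_N, 'I_(pure_grading i0 s i) -> R) :
  \prod_(i < N) \prod_(r < pure_grading i0 s i) F i r =
  \prod_(r < pure_grading i0 s i0) F i0 r.
Proof.
rewrite (bigD1 i0) //= [X in _ * X]big1 ?mulr1 // => i ii0.
by rewrite big1 // => -[r hr]; exfalso; move: hr; rewrite ffunE (negbTE ii0) muln0.
Qed.

Lemma prod_ord_nth (R : comPzRingType) n (F : 'I_n -> R) (G : nat -> R) (L : seq nat) :
  size L = n -> (forall r : 'I_n, F r = G (nth 0%N L r)) ->
  \prod_(r < n) F r = \prod_(b <- L) G b.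
Proof. by move=> hs hF; rewrite (big_nth 0%N) hs big_mkord; apply: eq_bigr => r _. Qed.

Lemma prod_ord1 (R : comPzRingType) n (F : 'I_n -> R) (h : (0 < n)%N) :
  n = 1%N -> \prod_(s < n) F s = F (Ordinal h).
Proof. by move=> n1; subst n; rewrite big_ord1; congr F; apply: val_inj. Qed.

Lemma val_enum_set n (P : pred nat) :
  [seq val a | a <- enum [set a : 'I_n | P (val a)]] = [seq b <- iota 0 n | P b].
Proof.
rewrite /enum_mem -enumT -val_enum_ord filter_map; congr map.
by apply: eq_filter => a; rewrite !inE.
Qed.

Section OneColourShuffle.
Variables (N : nat) (i0 : 'I_N) (m : grading N) (t : nat).
Hypotheses (mi0 : m i0 = t.+1) (mj : forall j, j != i0 -> m j = 0%N).
Local Notation M := (\sum_(i < N) m i).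

(* the shuffle in which the variable of the second factor sits at position [c] *)
Definition shuf_omit (c : 'I_t.+1) : {ffun 'I_N -> {set 'I_M.+1}} :=
  [ffun j => if j == i0 then [set a : 'I_M.+1 | (val a < t.+1)%N && (val a != c)] else set0].

Definition omit_seq (c : 'I_t.+1) := [seq b <- iota 0 t.+1 | b != val c].

Lemma size_omit_seq c : size (omit_seq c) = t.
Proof.
have := count_predC (pred1 (val c)) (iota 0 t.+1).
rewrite size_iota (count_uniq_mem _ (iota_uniq 0 t.+1)) mem_iota ltn_ord /=.
by rewrite size_filter add1n => -[].
Qed.

Lemma prod_omit_seq (R : comPzRingType) (G : nat -> R) c :
  \prod_(b <- omit_seq c) G b = \prod_(b < t.+1 | b != c) G b.
Proof. by rewrite big_filter -[iota 0 t.+1]/(index_iota 0 t.+1) big_mkord. Qed.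

Lemma shuf_pos1_omit c : shuf_pos1 (shuf_omit c) i0 = omit_seq c.
Proof.
rewrite /shuf_pos1 ffunE eqxx (val_enum_set _ (fun b => (b < t.+1)%N && (b != val c))).
have tM : (t < M)%N by rewrite -mi0 leq_grading_sum.
have -> : M.+1 = (t.+1 + (M - t))%N by rewrite addSn subnKC // ltnW.
rewrite iotaD filter_cat add0n.
have -> : [seq b <- iota t.+1 (M - t) | (b < t.+1)%N && (b != val c)] = [::].
  apply/eqP; rewrite -[_ == _]negbK -has_filter; apply/hasPn => b.
  by rewrite mem_iota => /andP [hb _]; rewrite ltnNge hb.
by rewrite cats0; apply: eq_in_filter => b; rewrite mem_iota add0n /= => ->.
Qed.

Lemma card_shuf_omit c j : #|shuf_omit c j| = if j == i0 then t else 0%N.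
Proof.
rewrite cardE; case: (eqVneq j i0) => [->|ji]; last by rewrite ffunE (negbTE ji) enum_set0.
by rewrite -(size_map val) -/(shuf_pos1 _ i0) shuf_pos1_omit size_omit_seq.
Qed.

Lemma shuf_adm_omit c : [forall j, shuf_omit c j \subset [set a | (val a < m j)%N]].
Proof.
apply/forallP => j; rewrite ffunE; case: (eqVneq j i0) => [->|_]; last exact: sub0set.
by apply/subsetP => a; rewrite !inE mi0 => /andP [].
Qed.

Lemma shuf_deg1_omit c : shuf_deg1 (shuf_omit c) = pure_grading i0 t.
Proof.
apply/ffunP => j; rewrite [LHS]ffunE card_shuf_omit ffunE.
by case: eqP; rewrite ?muln1 ?muln0.
Qed.

Lemma shuf_deg2_omit c : shuf_deg2 (shuf_omit c) = pure_grading i0 1.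
Proof.
apply/ffunP => j; rewrite [LHS]ffunE card_shuf_omit ffunE.
by case: (eqVneq j i0) => [->|/mj ->]; rewrite ?mi0 ?subSnn.
Qed.

Lemma shuf_pos2_omit c : shuf_pos2 (shuf_omit c) i0 = [:: val c].
Proof.
rewrite /shuf_pos2 shuf_pos1_omit mi0 (@eq_in_filter _ _ (pred1 (val c))).
  by rewrite filter_pred1_uniq ?iota_uniq // mem_iota add0n ltn_ord.
by move=> b hb; rewrite mem_filter hb andbT negbK.
Qed.

Lemma shuf_omit_inj : injective shuf_omit.
Proof.
move=> c c' e; apply/val_inj/eqP; apply: contraT => cc'.
have hc : (val c < M.+1)%N.
  by apply: (leq_trans (ltn_ord c)); rewrite -mi0; apply/leqW/leq_grading_sum.
have := congr1 (fun S : {ffun 'I_N -> {set 'I_M.+1}} => Ordinal hc \in S i0) e.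
by rewrite /= !ffunE eqxx !inE /= eqxx ltn_ord /= (negbTE cc').
Qed.

Lemma shuf_omitP (S : {ffun 'I_N -> {set 'I_M.+1}}) :
  [forall j, S j \subset [set a | (val a < m j)%N]] ->
  shuf_deg1 S = pure_grading i0 t -> exists c, S = shuf_omit c.
Proof.
move=> hS hk.
have cardS j : #|S j| = (t * (j == i0))%N.
  by have := congr1 (fun g : grading N => g j) hk; rewrite !ffunE.
have [c ct cS] : exists2 c, (c < t.+1)%N & c \notin shuf_pos1 S i0.
  have /allPn [c] : ~~ all (mem (shuf_pos1 S i0)) (iota 0 t.+1).
    apply/negP => /allP /(uniq_leq_size (iota_uniq 0 t.+1)).
    by rewrite size_iota size_shuf_pos1 ffunE cardS eqxx muln1 ltnn.
  by rewrite mem_iota add0n; exists c.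
exists (Ordinal ct); apply/ffunP => j; case: (eqVneq j i0) => [->|ji]; last first.
  by rewrite ffunE (negbTE ji); apply: cards0_eq; rewrite cardS (negbTE ji) muln0.
apply/eqP; rewrite eqEcard card_shuf_omit cardS !eqxx muln1 leqnn andbT.
apply/subsetP => a ha; rewrite ffunE eqxx inE /=.
have /subsetP /(_ a ha) := forallP hS i0; rewrite inE mi0 => -> /=.
by apply: contraNneq cS => <-; apply/mapP; exists a; rewrite ?mem_enum.
Qed.

End OneColourShuffle.

Section PowShuffle.
Variables (C : numFieldType) (N : nat) (i0 : 'I_N) (r0 : nat).

(* the image of [e_(i0, r0) ^+ t] *)
Definition powW (t : nat) : elt C N := fun k x =>
  if k == pure_grading i0 t then t`!%:R * \prod_(a < t) x i0 a ^+ r0 else 0.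

Lemma genW_pure : [ffun j => nat_of_bool (j == i0)] = pure_grading i0 1.
Proof. by apply/ffunP => j; rewrite !ffunE mul1n. Qed.

Lemma zeta_diag (w : C) : zeta i0 i0 w = 1 + w^-1.
Proof.
rewrite /zeta /cartan eqxx invfM mulrA -[(2%:~R : C)]/(2%:R) mulfV ?mul1r //.
by rewrite pnatr_eq0.
Qed.

Lemma shuf_term_powW_genW_neq0 t m x S :
  shuf_term (powW t) (genW i0 r0) m x S != 0 ->
  shuf_deg1 S = pure_grading i0 t /\ shuf_deg2 S = pure_grading i0 1.
Proof.
rewrite /shuf_term /powW /genW genW_pure.
have [-> | _] := eqVneq (shuf_deg1 S) (pure_grading i0 t); last by rewrite !mul0r eqxx.
by have [-> | _] := eqVneq (shuf_deg2 S) (pure_grading i0 1); last by rewrite mulr0 mul0r eqxx.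
Qed.

Section OmitTerm.
Variables (t : nat) (m : grading N) (x : pt C N).
Hypotheses (mi0 : m i0 = t.+1) (mj : forall j, j != i0 -> m j = 0%N).

Lemma shuf_term_omit c :
  shuf_term (powW t) (genW i0 r0) m x (shuf_omit i0 m c) =
  t`!%:R * (\prod_(a < t.+1) x i0 a ^+ r0) *
  \prod_(b < t.+1 | b != c) (1 + (x i0 b - x i0 c)^-1).
Proof.
rewrite /shuf_term /powW /genW genW_pure shuf_deg1_omit // shuf_deg2_omit // !eqxx.
under [X in _ * X]eq_bigr => i _ do rewrite exchange_big /=.
have h1 : (0 < pure_grading i0 1 i0)%N by rewrite pure_grading_diag.
rewrite prod_pure_grading.
under [X in _ * X]eq_bigr => r _ do
  rewrite prod_pure_grading (prod_ord1 _ h1) ?pure_grading_diag //.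
rewrite (prod_ord_nth (G := fun b => x i0 b ^+ r0) (L := omit_seq c)); last first.
- by move=> r; rewrite /shuf_idx1 shuf_pos1_omit.
- exact: size_omit_seq.
rewrite (prod_ord_nth (G := fun b => 1 + (x i0 b - x i0 c)^-1) (L := omit_seq c)); last first.
- by move=> r; rewrite /shuf_idx1 /shuf_idx2 shuf_pos1_omit // shuf_pos2_omit // zeta_diag.
- by rewrite size_omit_seq pure_grading_diag.
rewrite !prod_omit_seq /shuf_idx2 shuf_pos2_omit //= [in RHS](bigD1 c) //=; ring.
Qed.

End OmitTerm.

Lemma shufW_powW_genW t m x :
  generic m x -> shufW (powW t) (genW i0 r0) m x = powW t.+1 m x.
Proof.
(* Only the shuffles [shuf_omit c] contribute, and the Lagrange identity sums
   their zeta factors to [t.+1]. *)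
move=> hx; rewrite shufWE.
have [hm|hm] := eqVneq m (pure_grading i0 t.+1); last first.
  rewrite /powW (negbTE hm) big1 // => S hS; apply/eqP; apply: contraNT hm.
  move=> /shuf_term_powW_genW_neq0 [h1 h2]; apply/eqP/ffunP => j.
  by rewrite -(shuf_degD hS j) h1 h2 !ffunE -mulnDl addn1.
have mi0 : m i0 = t.+1 by rewrite hm pure_grading_diag.
have mj j : j != i0 -> m j = 0%N by rewrite hm ffunE => /negbTE ->; rewrite muln0.
rewrite (bigID (mem (@shuf_omit _ i0 m t @: 'I_t.+1))) /= [X in _ + X]big1 ?addr0; last first.
  move=> S /andP [hS]; apply: contraNeq => /shuf_term_powW_genW_neq0 [hk _].
  by have [c ->] := shuf_omitP mi0 hS hk; apply: imset_f.
rewrite (eq_bigl (mem (@shuf_omit _ i0 m t @: 'I_t.+1))) => [|S]; last first.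
  apply/andP/idP => [[]//|/imsetP [c _ ->]].
  by split; [exact: (shuf_adm_omit mi0) | exact: imset_f].
rewrite big_imset /=; last by move=> c c' _ _; apply: shuf_omit_inj.
under eq_bigr => c _ do rewrite shuf_term_omit //.
rewrite -big_distrr /= sum_prod_1_add_inv_sub; last first.
  move=> a b /(hx i0 i0 a b); rewrite mi0 !ltn_ord => /(_ isT isT) [_].
  exact: val_inj.
by rewrite /powW hm eqxx factS natrM; ring.
Qed.

End PowShuffle.

Section Closure.
Variables (C : numFieldType) (N : nat).
Implicit Types (X Y Z : elt C N).

Lemma eqW_trans X Y Z : eqW X Y -> eqW Y Z -> eqW X Z.
Proof. by move=> eXY eYZ k x hx; rewrite eXY // eYZ. Qed.

Lemma eqW_shufW X X' Y Y' : eqW X X' -> eqW Y Y' -> eqW (shufW X Y) (shufW X' Y').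
Proof.
move=> eX eY m x hx; rewrite !shufWE; apply: eq_bigr => S hS.
by rewrite /shuf_term eX ?eY //; [apply: generic_shuf2 | apply: generic_shuf1].
Qed.

Lemma eqW_scaleW c X Y : eqW X Y -> eqW (scaleW c X) (scaleW c Y).
Proof. by move=> eXY k x hx; rewrite /scaleW eXY. Qed.

Lemma inW_eqW X Y : eqW X Y -> inW X -> inW Y.
Proof.
move=> eXY [[s hs] hW]; split; first by exists s => k hk x hx; rewrite -eXY // hs.
move=> k; have [[f [hf ef]] hwh] := hW k; split.
  by exists f; split => // x hx; rewrite -eXY // ef.
move=> i j r1 r2 s' ij h1 h2 h3 r12 x hx e1 e2; rewrite -eXY //.
exact: (hwh i j r1 r2 s' ij h1 h2 h3 r12 x hx e1 e2).
Qed.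

Lemma dyadic_numer_addW X Y : dyadic_numer X -> dyadic_numer Y -> dyadic_numer (addW X Y).
Proof.
move=> hX hY k; have [f [hf ef]] := hX k; have [g [hg eg]] := hY k.
exists (f + g); split; first exact: dyadic_mpolyD.
by move=> x hx; rewrite /addW ef // eg // mevalD mulrDl.
Qed.

Lemma dyadic_numer_scaleW c X : dyadic c -> dyadic_numer X -> dyadic_numer (scaleW c X).
Proof.
move=> hc hX k; have [f [hf ef]] := hX k.
exists (c *: f); split; first exact: dyadic_mpolyZ.
by move=> x hx; rewrite /scaleW ef // mevalZ mulrA.
Qed.

Lemma dyadic_numer_oneW : dyadic_numer (@oneW C N).
Proof.
apply: dyadic_numer_polyfun => k.
exists (fun x => if k == [ffun => 0%N] then Dk k x else 0); split.
  by case: eqP => _; [apply: dyadic_polyfun_Dk | apply/dyadic_polyfun_const/dyadic0].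
by move=> x _; rewrite /oneW; case: ifP; rewrite ?mul1r ?mul0r.
Qed.

Lemma dyadic_numer_divpowW (i0 : 'I_N) r0 t :
  dyadic_numer (scaleW (t`!%:R)^-1 (powW (C := C) i0 r0 t)).
Proof.
apply: dyadic_numer_polyfun => k; exists (fun x : pt C N =>
  if k == pure_grading i0 t then (\prod_(a < t) x i0 a ^+ r0) * Dk k x else 0); split.
  case: eqP => [hk|_]; last exact/dyadic_polyfun_const/dyadic0.
  apply: dyadic_polyfunM; last exact: dyadic_polyfun_Dk.
  apply: dyadic_polyfun_prod => a _; apply/dyadic_polyfunX/dyadic_polyfun_var.
  by rewrite hk pure_grading_diag.
move=> x _; rewrite /scaleW /powW; case: ifP => _; last by rewrite !mulr0 mul0r.
by rewrite mulrA mulVf ?mul1r // pnatr_eq0 -lt0n fact_gt0.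
Qed.

Lemma eqW_oneW_powW0 (i0 : 'I_N) r0 : eqW (@oneW C N) (powW i0 r0 0).
Proof.
move=> k x _; rewrite /oneW /powW big_ord0 mulr1.
by have -> : pure_grading i0 0 = [ffun => 0%N] by apply/ffunP => j; rewrite !ffunE.
Qed.

End Closure.

Unset Implicit Arguments.
Theorem lemma2p12 (R : realType) (n : nat) (hn : (2 <= n)%N)
  (A : algType R[i]) (e : 'I_n.-1 -> nat -> A) (Psi : A -> elt R[i] n.-1) :
  Yrel e -> Psi_iso e Psi ->
  forall a : A, Ysub e a -> inbW (Psi a).
Proof.
move=> _ [Psi_add [Psi_scale [Psi_mul [Psi_one [Psi_gen [Psi_in _]]]]]] a ha.
split; first exact: Psi_in.
suff : dyadic_numer (Psi a) by move=> h k; have [f [hf ef]] := h k; exists f.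
elim: ha => {a} [i r t||a b _ ha _ hb|a b _ ha _ hb|c a hc _ ha].
- have Psi_pow s : eqW (Psi (e i r ^+ s)) (powW i r s).
    elim: s => [|s ih]; first by rewrite expr0; apply: eqW_trans Psi_one (eqW_oneW_powW0 _ _).
    rewrite exprSr; apply: eqW_trans (Psi_mul _ _) _.
    apply: eqW_trans (eqW_shufW ih (Psi_gen i r)) _.
    exact: shufW_powW_genW.
  apply: dyadic_numer_eqW (eqW_trans (Psi_scale _ _) (eqW_scaleW _ (Psi_pow t))) _.
  exact: dyadic_numer_divpowW.
- apply: (dyadic_numer_eqW Psi_one); exact: dyadic_numer_oneW.
- exact: dyadic_numer_eqW (Psi_add a b) (dyadic_numer_addW ha hb).
- apply: dyadic_numer_eqW (Psi_mul a b) (dyadic_numer_disc_frac _ _).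
  + exact: inW_eqW (Psi_mul a b) (Psi_in _).
  + exact: disc_frac_shufW.
- exact: dyadic_numer_eqW (Psi_scale c a) (dyadic_numer_scaleW hc ha).
Qed.
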